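(* Let $N\in\{1,2\}$, let $\lambda_1,\dots,\lambda_N$ be distinct real numbers and $\mu_1,\dots,\mu_N$ nonzero real constants, and let $\bar F_j$ ($1\le j\le N$) and $F_m$ ($1\le m\le 2N$) be the functions on $\mathbb{R}^{6N}$ defined below. Consider the $3N\times3N$ matrix \[D(N)=\begin{pmatrix}(\mathrm{grad}_{P_1}\bar F_1)^T&(\mathrm{grad}_{P_2}\bar F_1)^T&(\mathrm{grad}_{P_3}\bar F_1)^T\\ \vdots&\vdots&\vdots\\ (\mathrm{grad}_{P_1}\bar F_N)^T&(\mathrm{grad}_{P_2}\bar F_N)^T&(\mathrm{grad}_{P_3}\bar F_N)^T\\ (\mathrm{grad}_{P_1}F_1)^T&(\mathrm{grad}_{P_2}F_1)^T&(\mathrm{grad}_{P_3}F_1)^T\\ \vdots&\vdots&\vdots\\ (\mathrm{grad}_{P_1}F_{2N})^T&(\mathrm{grad}_{P_2}F_{2N})^T&(\mathrm{grad}_{P_3}F_{2N})^T\end{pmatrix},\] where $\mathrm{grad}_{P_i}G=(\frac{\partial G}{\partial\phi_{i1}},\dots,\frac{\partial G}{\partial\phi_{iN}})^T$. Then $\det D(N)$ is not identically zero on $\mathbb{R}^{6N}$; consequently the integrals of motion $\bar F_j$, $1\le j\le N$, and $F_m$, $1\le m\le 2N$, are independent at least on some region of $\mathbb{R}^{6N}$.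
   Context: Coordinates on $\mathbb{R}^{6N}$: $\phi_{ij},\psi_{ij}$ ($i=1,2,3$, $j=1,\dots,N$); $P_i=(\phi_{i1},\dots,\phi_{iN})^T$, $Q_i=(\psi_{i1},\dots,\psi_{iN})^T$; $A=\mathrm{diag}(\lambda_1,\dots,\lambda_N)$, $B=\mathrm{diag}(\mu_1,\dots,\mu_N)$; $\langle\cdot,\cdot\rangle$ the standard inner product on $\mathbb{R}^N$. $\bar F_j=\sum_{i=1}^3\phi_{ij}\psi_{ij}$. $F_1=-8(\langle P_1,BQ_1\rangle-\langle P_3,BQ_3\rangle)$ and for $m\ge2$: $F_m=4\sum_{i=1}^{m-1}\big[(\langle A^{i-1}P_1,BQ_1\rangle-\langle A^{i-1}P_3,BQ_3\rangle)(\langle A^{m-i-1}P_1,BQ_1\rangle-\langle A^{m-i-1}P_3,BQ_3\rangle)+2(\langle A^{i-1}P_1,BQ_2\rangle+\langle A^{i-1}P_2,BQ_3\rangle)(\langle A^{m-i-1}P_2,BQ_1\rangle+\langle A^{m-i-1}P_3,BQ_2\rangle)\big]-8(\langle A^{m-1}P_1,BQ_1\rangle-\langle A^{m-1}P_3,BQ_3\rangle)$. *)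

From HB Require Import structures.
From mathcomp Require Import all_boot all_order all_algebra.
From mathcomp Require Import mpoly.
Set Implicit Arguments. Unset Strict Implicit. Unset Printing Implicit Defensive.
Import Order.TTheory GRing.Theory Num.Theory.
Local Open Scope ring_scope.

(* Coordinates on R^{6N}: 6N = 3N + 3N polynomial variables.
   phi_{ij} (i : 'I_3 for i = 1,2,3; j : 'I_N) is variable number i*N + j
   (= lshift (mxvec_index i j)); psi_{ij} is variable number 3N + i*N + j. *)
Section Defs.
Variables (R : realFieldType) (N : nat).
Variables (lambda mu : 'I_N -> R).

Notation P := {mpoly R[3 * N + 3 * N]}.

Definition phi_var (i : 'I_3) (j : 'I_N) : 'I_(3 * N + 3 * N) :=
  lshift (3 * N) (mxvec_index i j).
Definition psi_var (i : 'I_3) (j : 'I_N) : 'I_(3 * N + 3 * N) :=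
  rshift (3 * N) (mxvec_index i j).

Definition phi (i : 'I_3) (j : 'I_N) : P := 'X_(phi_var i j).
Definition psi (i : 'I_3) (j : 'I_N) : P := 'X_(psi_var i j).

(* <A^k P_a, B Q_b> = sum_j lambda_j^k mu_j phi_{aj} psi_{bj} *)
Definition ip (k : nat) (a b : 'I_3) : P :=
  \sum_(j < N) (lambda j ^+ k * mu j) *: (phi a j * psi b j).

Definition i1 : 'I_3 := 0.
Definition i2 : 'I_3 := 1.
Definition i3 : 'I_3 := 2.

Definition Fbar (j : 'I_N) : P := \sum_(i < 3) phi i j * psi i j.

(* F_m for m >= 1 (for m = 1 the sum is empty and this is F_1). *)
Definition F (m : nat) : P :=
  4%:R * \sum_(1 <= i < m)
     ((ip i.-1 i1 i1 - ip i.-1 i3 i3) * (ip (m - i).-1 i1 i1 - ip (m - i).-1 i3 i3)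
      + 2%:R * ((ip i.-1 i1 i2 + ip i.-1 i2 i3) * (ip (m - i).-1 i2 i1 + ip (m - i).-1 i3 i2)))
  - 8%:R * (ip m.-1 i1 i1 - ip m.-1 i3 i3).

(* column c : 'I_(3N) = mxvec_index i j corresponds to d/d phi_{ij}
   (columns ordered P_1 block, P_2 block, P_3 block as in the paper) *)
Definition Dtop : 'M[P]_(N, 3 * N) :=
  \matrix_(j < N, c < 3 * N) mderiv (lshift (3 * N) c) (Fbar j).
Definition Dbot : 'M[P]_(2 * N, 3 * N) :=
  \matrix_(k < 2 * N, c < 3 * N) mderiv (lshift (3 * N) c) (F k.+1).

Lemma D_size : (N + 2 * N = 3 * N)%N.
Proof. by rewrite -[in RHS](addn1 2) mulnDl mul1n addnC. Qed.

Definition D : 'M[P]_(3 * N) := castmx (D_size, erefl) (col_mx Dtop Dbot).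

End Defs.

(* Evaluate D at the point with phi_1 = phi_3 = 0, phi_2 = t, psi_1 = psi_3 = 1 and
   psi_2 = 0.  There d F_(k+1) / d phi_(1j) = -8 lambda_j^k mu_j = - d F_(k+1) / d phi_(3j),
   while d F_(k+1) / d phi_(2j) = 16 mu_j sum_(i<k) lambda_j^i s_(k-1-i) with the moments
   s_k = sum_j lambda_j^k mu_j t_j.  Hence a row vector (w, z) in the left kernel of D at
   that point has w = 0, and for every j both sum_k z_k lambda_j^k and
   sum_k z_k sum_(i<k) lambda_j^i s_(k-1-i) vanish.  For N = 1 and t = 1 this gives z = 0
   at once.  For N = 2 the weights t = (mu_2, -mu_1) make s_0 = 0 and
   s_1 = mu_1 mu_2 (lambda_1 - lambda_2) nonzero, so both families of equations are affine
   in lambda_j, and two distinct values lambda_1, lambda_2 force z = 0. *)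

From HB Require Import structures.
From mathcomp Require Import all_boot all_order all_algebra.
From mathcomp Require Import mpoly ring.
Import Order.TTheory GRing.Theory Num.Theory.
Local Open Scope ring_scope.
Set Implicit Arguments. Unset Strict Implicit. Unset Printing Implicit Defensive.

Lemma meval_mderivX (n : nat) (R : comNzRingType) (x : 'I_n -> R) (i j : 'I_n) :
  (mderiv i ('X_j : {mpoly R[n]})).@[x] = (j == i)%:R.
Proof.
rewrite mderivX mevalZ mnm1E; case: eqP => [->|_]; last by rewrite mul0r.
by rewrite -{1}[U_(i)%MM]add0m addmK mpolyX0 meval1 mulr1.
Qed.

Lemma eq_mxvec_index (m n : nat) (a b : 'I_m) (j k : 'I_n) :
  (mxvec_index a j == mxvec_index b k) = (a == b) && (j == k).
Proof.
apply/eqP/andP => [|[/eqP -> /eqP ->] //].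
by rewrite /mxvec_index => /cast_ord_inj /enum_rank_inj [-> ->].
Qed.

Lemma mulmx_castmx (R : pzSemiRingType) (m n n' p : nat) (e : n = n')
    (A : 'M[R]_(m, n')) (B : 'M[R]_(n, p)) :
  A *m castmx (e, erefl) B = castmx (erefl, esym e) A *m B.
Proof. by case: n' / e A => A; rewrite !castmx_id. Qed.

Section Evaluation.
Variables (R : realFieldType) (N : nat) (lambda mu : 'I_N -> R).
Variable x : 'I_(3 * N + 3 * N) -> R.

Lemma meval_dphi_phi a j' b j :
  (mderiv (phi_var a j') (phi R b j)).@[x] = ((b == a) && (j == j'))%:R.
Proof. by rewrite meval_mderivX (inj_eq (@lshift_inj _ _)) eq_mxvec_index. Qed.

Lemma meval_dphi_psi a j' b j : (mderiv (phi_var a j') (psi R b j)).@[x] = 0.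
Proof.
rewrite meval_mderivX; case: eqP => // psi_phi.
have : (3 * N <= psi_var b j)%N by exact: leq_addr.
by rewrite psi_phi leqNgt (ltn_ord (mxvec_index a j') : (phi_var a j' < 3 * N)%N).
Qed.

Lemma meval_ip k b c : (ip lambda mu k b c).@[x] =
  \sum_(j < N) lambda j ^+ k * mu j * x (phi_var b j) * x (psi_var c j).
Proof.
rewrite raddf_sum; apply: eq_bigr => j _.
by rewrite /= mevalZ mevalM !mevalXU mulrA.
Qed.

Lemma meval_dphi_ip a j' k b c : (mderiv (phi_var a j') (ip lambda mu k b c)).@[x] =
  (b == a)%:R * (lambda j' ^+ k * mu j' * x (psi_var c j')).
Proof.
rewrite /ip (raddf_sum (mderiv _)) (raddf_sum (meval x)) /= (bigD1 j') //= big1 ?addr0.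
  rewrite mderivZ mderivM mevalZ mevalD !mevalM meval_dphi_phi meval_dphi_psi.
  by rewrite eqxx andbT mulr0 addr0 mevalXU mulrCA mulrA.
move=> j /negbTE nj; rewrite mderivZ mderivM mevalZ mevalD !mevalM.
by rewrite meval_dphi_phi meval_dphi_psi nj andbF mul0r mulr0 addr0 mulr0.
Qed.

Lemma meval_dphi_Fbar a j' j :
  (mderiv (phi_var a j') (Fbar R j)).@[x] = (j == j')%:R * x (psi_var a j).
Proof.
rewrite /Fbar (raddf_sum (mderiv _)) (raddf_sum (meval x)) /= (bigD1 a) //= big1 ?addr0.
  rewrite mderivM mevalD !mevalM meval_dphi_phi meval_dphi_psi eqxx mulr0 addr0.
  by rewrite mevalXU; case: (j == j'); rewrite ?mul1r ?mul0r.
move=> i /negbTE ni; rewrite mderivM mevalD !mevalM meval_dphi_phi meval_dphi_psi ni.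
by rewrite mul0r mulr0 addr0.
Qed.

Lemma meval_dphi_F a j' m :
  let dI k b c := (mderiv (phi_var a j') (ip lambda mu k b c)).@[x] in
  let eI k b c := (ip lambda mu k b c).@[x] in
  (mderiv (phi_var a j') (F lambda mu m)).@[x] =
  (\sum_(1 <= i < m)
     ((dI i.-1 i1 i1 - dI i.-1 i3 i3) * (eI (m - i).-1 i1 i1 - eI (m - i).-1 i3 i3)
    + (eI i.-1 i1 i1 - eI i.-1 i3 i3) * (dI (m - i).-1 i1 i1 - dI (m - i).-1 i3 i3)
    + ((dI i.-1 i1 i2 + dI i.-1 i2 i3) * (eI (m - i).-1 i2 i1 + eI (m - i).-1 i3 i2)
    + (eI i.-1 i1 i2 + eI i.-1 i2 i3) * (dI (m - i).-1 i2 i1 + dI (m - i).-1 i3 i2)) *+ 2))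
     *+ 4
  - (dI m.-1 i1 i1 - dI m.-1 i3 i3) *+ 8.
Proof.
rewrite /F !mulr_natl mderivB !mderivMn mevalB !mevalMn.
rewrite (raddf_sum (mderiv _)) (raddf_sum (meval x)) /= mderivB mevalB.
congr (_ *+ 4 - _); apply: eq_bigr => i _.
rewrite mulr_natl mderivD mderivMn !mderivM !mderivD !mderivN.
by rewrite !(mevalD, mevalN, mevalMn, mevalM) mulr2n.
Qed.

End Evaluation.

Lemma sum_convolution_sym (R : comPzSemiRingType) (f g : nat -> R) (k : nat) :
  \sum_(1 <= i < k.+1) (f i.-1 * g (k.+1 - i).-1 + g i.-1 * f (k.+1 - i).-1) =
  (\sum_(i < k) f i * g (k.-1 - i)%N) *+ 2.
Proof.
rewrite big_add1 /= big_mkord big_split /= mulr2n; congr (_ + _).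
  by apply: eq_bigr => i _; rewrite subSS predn_sub.
rewrite (reindex_inj rev_ord_inj) /=; apply: eq_bigr => i _.
by rewrite subSS subKn // subnS predn_sub mulrC.
Qed.

Section SpecialPoint.
Variables (R : realFieldType) (N : nat) (lambda mu t : 'I_N -> R).

Definition special_point : 'I_(3 * N + 3 * N) -> R :=
  row_mx (mxvec (\matrix_(i < 3, j < N) ((i == i2)%:R * t j)))
         (mxvec (\matrix_(i < 3, j < N) (i != i2)%:R)) 0.

Lemma special_point_phi a j : special_point (phi_var a j) = (a == i2)%:R * t j.
Proof. by rewrite /special_point row_mxEl mxvecE mxE. Qed.

Lemma special_point_psi a j : special_point (psi_var a j) = (a != i2)%:R.
Proof. by rewrite /special_point row_mxEr mxvecE mxE. Qed.

Definition moment (k : nat) : R := \sum_(j < N) lambda j ^+ k * mu j * t j.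

Let mulr01E := (mul0r, mul1r, mulr0, mulr1, subrr, subr0, addr0, add0r).

Lemma meval_ip_special k b c :
  (ip lambda mu k b c).@[special_point] = (b == i2)%:R * (c != i2)%:R * moment k.
Proof.
rewrite meval_ip /moment mulr_sumr; apply: eq_bigr => j _.
rewrite special_point_phi special_point_psi.
by case: (b == i2); case: (c != i2); rewrite !mulr01E.
Qed.

Lemma meval_dphi_ip_special a j k b c :
  (mderiv (phi_var a j) (ip lambda mu k b c)).@[special_point] =
  (b == a)%:R * (c != i2)%:R * (lambda j ^+ k * mu j).
Proof.
rewrite meval_dphi_ip special_point_psi.
by case: (c != i2); rewrite !mulr01E.
Qed.

Lemma meval_dphi1_F_special k j :
  (mderiv (phi_var i1 j) (F lambda mu k.+1)).@[special_point] =
  - (lambda j ^+ k * mu j) *+ 8.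
Proof.
rewrite meval_dphi_F /=.
under eq_bigr do rewrite !meval_dphi_ip_special !meval_ip_special /= !mulr01E mul0rn.
by rewrite !meval_dphi_ip_special /= !mulr01E big1 // mul0rn sub0r mulNrn.
Qed.

Lemma meval_dphi3_F_special k j :
  (mderiv (phi_var i3 j) (F lambda mu k.+1)).@[special_point] =
  (lambda j ^+ k * mu j) *+ 8.
Proof.
rewrite meval_dphi_F /=.
under eq_bigr do rewrite !meval_dphi_ip_special !meval_ip_special /= !mulr01E mul0rn.
by rewrite !meval_dphi_ip_special /= !mulr01E big1 // mul0rn sub0r mulNrn opprK.
Qed.

Lemma meval_dphi2_F_special k j :
  (mderiv (phi_var i2 j) (F lambda mu k.+1)).@[special_point] =
  mu j * (\sum_(i < k) lambda j ^+ i * moment (k.-1 - i)%N) *+ 16.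
Proof.
rewrite meval_dphi_F /=.
under eq_bigr do rewrite !meval_dphi_ip_special !meval_ip_special /= !mulr01E.
rewrite !meval_dphi_ip_special /= !mulr01E mul0rn subr0 sumrMnl.
rewrite (sum_convolution_sym (fun n => lambda j ^+ n * mu j) moment) -!mulrnA.
by rewrite mulr_sumr; congr (_ *+ _); apply: eq_bigr => i _; rewrite mulrCA mulrA.
Qed.

End SpecialPoint.

Section Kernel.
Variables (R : realFieldType) (N : nat).

Definition Fbar_coef (v : 'rV[R]_(3 * N)) : 'rV_N :=
  lsubmx (castmx (erefl, esym (D_size N)) v).
Definition F_coef (v : 'rV[R]_(3 * N)) : 'rV_(2 * N) :=
  rsubmx (castmx (erefl, esym (D_size N)) v).

Lemma coef_eq0 v : Fbar_coef v = 0 -> F_coef v = 0 -> v = 0.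
Proof.
move=> vFbar0 vF0; rewrite -[v](castmxKV erefl (D_size N)) -[castmx _ v]hsubmxK.
by rewrite -/(Fbar_coef v) -/(F_coef v) vFbar0 vF0 row_mx0 castmx_const.
Qed.

Variables (lambda mu t : 'I_N -> R) (v : 'rV[R]_(3 * N)).
Hypothesis mu_neq0 : forall j, mu j != 0.
Hypothesis v_ker : v *m map_mx (meval (special_point t)) (D lambda mu) = 0.

Local Notation w := (Fbar_coef v 0).
Local Notation z := (F_coef v 0).

Lemma kernel_column a j :
  w j * (a != i2)%:R +
  \sum_(k < 2 * N) z k * (mderiv (phi_var a j) (F lambda mu k.+1)).@[special_point t] = 0.
Proof.
move: v_ker; rewrite /D map_castmx mulmx_castmx map_col_mx -[castmx _ v]hsubmxK mul_row_col.
move=> /rowP /(_ (mxvec_index a j)); rewrite !mxE => col; rewrite -[RHS]col.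
congr (_ + _).
  rewrite (bigD1 j) //= big1 => [|i /negbTE ni]; rewrite !mxE meval_dphi_Fbar special_point_psi.
    by rewrite eqxx mul1r addr0.
  by rewrite ni mul0r mulr0.
by apply: eq_bigr => k _; rewrite !mxE.
Qed.

Let scaled_eq0 j (c : R) : (c * mu j *+ 16 == 0) = (c == 0).
Proof. by rewrite mulrn_eq0 mulf_eq0 (negbTE (mu_neq0 j)) orbF. Qed.

Local Notation power_sum j := (\sum_(k < 2 * N) z k * lambda j ^+ k).

Lemma kernel_column1 j : w j - power_sum j * mu j *+ 8 = 0.
Proof.
rewrite -[RHS](kernel_column i1 j) mulr1 mulr_suml -sumrMnl -sumrN; congr (_ + _).
by apply: eq_bigr => k _; rewrite meval_dphi1_F_special; ring.
Qed.

Lemma kernel_column3 j : w j + power_sum j * mu j *+ 8 = 0.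
Proof.
rewrite -[RHS](kernel_column i3 j) mulr1 mulr_suml -sumrMnl; congr (_ + _).
by apply: eq_bigr => k _; rewrite meval_dphi3_F_special; ring.
Qed.

Lemma kernel_power_sum j : power_sum j = 0.
Proof.
apply/eqP; rewrite -(scaled_eq0 j); apply/eqP.
have : (w j + power_sum j * mu j *+ 8) - (w j - power_sum j * mu j *+ 8) =
  power_sum j * mu j *+ 16 by ring.
by rewrite kernel_column1 kernel_column3 subrr => <-.
Qed.

Lemma kernel_Fbar_coef : Fbar_coef v = 0.
Proof.
apply/rowP => j; rewrite [RHS]mxE.
have : (w j + power_sum j * mu j *+ 8) + (w j - power_sum j * mu j *+ 8) = w j *+ 2 by ring.
by rewrite kernel_column1 kernel_column3 addr0 => /esym/eqP; rewrite mulrn_eq0 => /eqP.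
Qed.

Lemma kernel_convolution j :
  \sum_(k < 2 * N) z k * \sum_(i < k) lambda j ^+ i * moment lambda mu t (k.-1 - i)%N = 0.
Proof.
apply/eqP; rewrite -(scaled_eq0 j); apply/eqP.
rewrite -[RHS](kernel_column i2 j) mulr0 add0r mulr_suml -sumrMnl.
by apply: eq_bigr => k _; rewrite meval_dphi2_F_special; ring.
Qed.

End Kernel.

Lemma affine_eq0 (R : idomainType) (a b x y : R) :
  x != y -> a + b * x = 0 -> a + b * y = 0 -> a = 0 /\ b = 0.
Proof.
move=> xy ax ay; have b0 : b = 0.
  have : b * (x - y) = 0 by rewrite mulrBr -(subrr 0) -{1}ax -ay; ring.
  by move/eqP; rewrite mulf_eq0 subr_eq0 (negbTE xy) orbF => /eqP.
by move: ax; rewrite b0 mul0r addr0.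
Qed.

Lemma left_kernel_eq0_N1 (R : realFieldType) (lambda mu : 'I_1 -> R) (v : 'rV[R]_(3 * 1)) :
  (forall j, mu j != 0) ->
  v *m map_mx (meval (special_point (fun _ => 1))) (D lambda mu) = 0 -> v = 0.
Proof.
move=> mu_neq0 v_ker; apply: coef_eq0 (kernel_Fbar_coef v_ker) _.
have := kernel_power_sum mu_neq0 v_ker ord0; have := kernel_convolution mu_neq0 v_ker ord0.
rewrite -[(2 * 1)%N]/2%N /moment !big_ord_recl !big_ord0 /= /bump /=.
rewrite !(expr0, expr1, mulr0, mulr1, mul1r, add0r, addr0) => conv psum.
have z1 : F_coef v 0 (lift ord0 ord0) = 0.
  by move/eqP: conv; rewrite mulf_eq0 (negbTE (mu_neq0 ord0)) orbF => /eqP.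
have z0 : F_coef v 0 ord0 = 0 by rewrite -psum z1 mul0r addr0.
apply/rowP => k; rewrite [RHS]mxE.
by case: (unliftP ord0 k) => [{}k|] ->; rewrite ?(ord1 k).
Qed.

Definition balancing_weights (R : pzRingType) (mu : 'I_2 -> R) (j : 'I_2) : R :=
  if j == ord0 then mu (lift ord0 ord0) else - mu ord0.

Lemma left_kernel_eq0_N2 (R : realFieldType) (lambda mu : 'I_2 -> R) (v : 'rV[R]_(3 * 2)) :
  injective lambda -> (forall j, mu j != 0) ->
  v *m map_mx (meval (special_point (balancing_weights mu))) (D lambda mu) = 0 -> v = 0.
Proof.
move=> lambda_inj mu_neq0 v_ker; apply: coef_eq0 (kernel_Fbar_coef v_ker) _.
have psum := kernel_power_sum mu_neq0 v_ker; have conv := kernel_convolution mu_neq0 v_ker.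
set z := F_coef v 0 in psum conv *; set s := moment _ _ _ in conv.
have s0 : s 0 = 0.
  by rewrite /s /moment !big_ord_recl big_ord0 /balancing_weights /=; ring.
have s1 : s 1 = mu ord0 * mu (lift ord0 ord0) * (lambda ord0 - lambda (lift ord0 ord0)).
  by rewrite /s /moment !big_ord_recl big_ord0 /balancing_weights /=; ring.
have l01 : lambda ord0 != lambda (lift ord0 ord0) by rewrite (inj_eq lambda_inj).
have s1_neq0 : s 1 != 0 by rewrite s1 !mulf_neq0 ?subr_eq0.
move: psum conv; rewrite -[(2 * 2)%N]/4%N => psum conv.
move: (conv ord0) (conv (lift ord0 ord0)) (psum ord0) (psum (lift ord0 ord0)).
rewrite !big_ord_recl !big_ord0 /= /bump !addnE !subnE /= s0.
set z0 := z ord0; set z1 := z (lift ord0 ord0); set z2 := z (lift ord0 (lift ord0 ord0)).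
set z3 := z (lift ord0 (lift ord0 (lift ord0 ord0))) => conv0 conv1 psum0 psum1.
have [z23 z3s1] : z2 * s 1 + z3 * s 2 = 0 /\ z3 * s 1 = 0.
  by apply: (affine_eq0 l01); [rewrite -[RHS]conv0 | rewrite -[RHS]conv1]; ring.
have z3_0 : z3 = 0 by move/eqP: z3s1; rewrite mulf_eq0 (negbTE s1_neq0) orbF => /eqP.
have z2_0 : z2 = 0.
  by move/eqP: z23; rewrite z3_0 mul0r addr0 mulf_eq0 (negbTE s1_neq0) orbF => /eqP.
have [z0_0 z1_0] : z0 = 0 /\ z1 = 0.
  by apply: (affine_eq0 l01); [rewrite -[RHS]psum0 | rewrite -[RHS]psum1]; rewrite z2_0 z3_0; ring.
apply/rowP => k; rewrite [RHS]mxE.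
case: (unliftP ord0 k) => [{}k|] ->; last exact: z0_0.
case: (unliftP ord0 k) => [{}k|] ->; last exact: z1_0.
case: (unliftP ord0 k) => [{}k|] ->; last exact: z2_0.
by rewrite (ord1 k); exact: z3_0.
Qed.

Lemma meval_det_neq0 (R : fieldType) (n m : nat) (x : 'I_n -> R) (A : 'M[{mpoly R[n]}]_m) :
  (forall v : 'rV_m, v *m map_mx (meval x) A = 0 -> v = 0) -> (\det A).@[x] != 0.
Proof.
move=> ker0; rewrite -det_map_mx; apply/det0P => -[v /negP v_neq0 /ker0 v0].
by apply: v_neq0; rewrite v0.
Qed.

Theorem theorem3p3 (R : realFieldType) (N : nat) (lambda mu : 'I_N -> R) :
  (N = 1 \/ N = 2)%N ->
  injective lambda ->
  (forall j, mu j != 0) ->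
  exists x : 'I_(3 * N + 3 * N) -> R, (\det (D lambda mu)).@[x] != 0.
Proof.
case=> N_eq; subst N => lambda_inj mu_neq0.
  exists (special_point (fun _ => 1)); apply: meval_det_neq0 => v.
  exact: left_kernel_eq0_N1.
exists (special_point (balancing_weights mu)); apply: meval_det_neq0 => v.
exact: left_kernel_eq0_N2.
Qed.
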